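(* Let $\mathrm b$ be a profile, $C\ge 0$, $r>0$, and $n$ large enough that $\rho_n^\pm:=\tfrac12\pm\tfrac{r}{n^{1/3}}\in[1/4,3/4]$. With $$\Delta_n^{\mathrm b}(u):=\frac{L^{\mathrm b}[un^{2/3}]_n-L^{\mathrm b}[0]_n}{2^{3/2}n^{1/3}},\qquad B^{\pm}_n(u):=\frac{L^{\rho_n^\pm}[un^{2/3}]_n-L^{\rho_n^\pm}[0]_n-\mu_{\rho_n^\pm}un^{2/3}}{2^{3/2}n^{1/3}},\quad \mu_\rho=\frac{2\rho-1}{\rho(1-\rho)},$$ and $$E_n(r):=\left\{Z^{\rho_n^-}[Cn^{2/3}]_n\le Z^{\mathrm b}[0]_n\ \text{ and }\ Z^{\mathrm b}[Cn^{2/3}]_n\le Z^{\rho_n^+}[0]_n\right\},$$ on the event $E_n(r)$ one has, for every $\delta\in[0,C]$, $$W_{\Delta^{\mathrm b}_n}(\delta)\le\max\left\{W_{B^-_n}(\delta),W_{B^+_n}(\delta)\right\}+3\sqrt2\,\delta r,$$ where for a process $X$ on $[0,C]$, $W_X(\delta):=\sup\{|X(u)-X(v)|:u,v\in[0,C],\ |u-v|\le\delta\}$.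
   Context: Let $\omega=\{\omega_{i,j}:(i,j)\in\mathbb Z^2,\ i+j>0\}$ be i.i.d. exponential random variables with parameter $1$. Write $(i,j)\le(k,l)$ if $i\le k$ and $j\le l$. An up-right path from $\mathbf x$ to $\mathbf y$ is a sequence $\mathbf x=\mathbf x_0,\dots,\mathbf x_m=\mathbf y$ with increments in $\{(1,0),(0,1)\}$; its passage time is $\sum_{i=1}^m\omega_{\mathbf x_i}$ (starting point excluded). For $\mathbf x=(i,j)\le\mathbf y$ with $i+j\ge0$, $L(\mathbf x,\mathbf y)$ is the maximal passage time over up-right paths. Set $L_k(\mathbf x)=L((k,-k),\mathbf x)$, $C^{\mathbf x}=\{k\in\mathbb Z:(k,-k)\le\mathbf x\}$; for integer $k$, $[k]_n:=(n+k,n-k)$, for real $x$, $[x]_n:=[\lfloor x\rfloor]_n$. A profile is $\mathrm b:\mathbb Z\to\mathbb R\cup\{-\infty\}$ with $\mathrm b(0)=0$ (possibly random, independent of $\omega$); $L^{\mathrm b}(\mathbf x):=\max_{k\in C^{\mathbf x}}\{\mathrm b(k)+L_k(\mathbf x)\}$ and $Z^{\mathrm b}(\mathbf x)$ is the largest maximizing $k$. For $\rho\in(0,1)$ the stationary profile $\mathrm s_\rho$ is $\mathrm s_\rho(0)=0$, $\mathrm s_\rho(k)=\sum_{i=1}^k\zeta_i$ ($k>0$), $\mathrm s_\rho(k)=-\sum_{i=k+1}^0\zeta_i$ ($k<0$), with $\zeta_i$ i.i.d. copies of $E_1-E_2$, $E_1,E_2$ independent exponentials of rates $1-\rho$ and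 $\rho$, independent of $\omega$; $L^\rho:=L^{\mathrm s_\rho}$, $Z^\rho:=Z^{\mathrm s_\rho}$. All processes use the same $\omega$. *)

From HB Require Import structures.
From mathcomp Require Import all_boot all_order all_algebra.
From mathcomp Require Import all_classical all_reals.
From mathcomp Require Import ereal exp.
Set Implicit Arguments. Unset Strict Implicit. Unset Printing Implicit Defensive.
Import Order.TTheory GRing.Theory Num.Theory.
Local Open Scope classical_set_scope.
Local Open Scope ring_scope.

Section LPP.
Variable R : realType.

Definition pt := (int * int)%type.

Definition ptle (x y : pt) : Prop := (x.1 <= y.1) /\ (x.2 <= y.2).

(* An up-right path starting at x is encoded by its list of steps
   (true = (1,0), false = (0,1)); its t-th point is path_pt x s t. *)
Definition path_pt (x : pt) (s : seq bool) (t : nat) : pt :=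
  (x.1 + (count id (take t s))%:Z, x.2 + (count negb (take t s))%:Z).

(* passage time: sum of weights of x_1, ..., x_m (start excluded) *)
Definition passage (omega : pt -> R) (x : pt) (s : seq bool) : R :=
  \sum_(1 <= t < (size s).+1) omega (path_pt x s t).

Definition paths_from_to (x y : pt) : set (seq bool) :=
  [set s | path_pt x s (size s) = y].

Definition LPT (omega : pt -> R) (x y : pt) : \bar R :=
  ereal_sup [set (passage omega x s)%:E | s in paths_from_to x y].

Definition Lk (omega : pt -> R) (k : int) (x : pt) : \bar R :=
  LPT omega (k, - k) x.

Definition Cset (x : pt) : set int := [set k | ptle (k, - k) x].

Definition is_profile (b : int -> \bar R) : Prop :=
  b 0 = 0%E /\ forall k, b k != +oo%E.

Definition Lb (omega : pt -> R) (b : int -> \bar R) (x : pt) : \bar R :=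
  ereal_sup [set (b k + Lk omega k x)%E | k in Cset x].

Definition is_Zb (omega : pt -> R) (b : int -> \bar R) (x : pt) (k : int) : Prop :=
  Cset x k /\ (b k + Lk omega k x)%E = Lb omega b x /\
  forall k', Cset x k' -> (b k' + Lk omega k' x)%E = Lb omega b x -> k' <= k.

Definition Zb (omega : pt -> R) (b : int -> \bar R) (x : pt) : int :=
  xget 0 (is_Zb omega b x).

Definition diag (n : nat) (k : int) : pt := (n%:Z + k, n%:Z - k).
Definition rdiag (n : nat) (x : R) : pt := diag n (Num.floor x).

(* stationary profile built from increments zeta_i (i in Z):
   s(0)=0, s(k)=sum_{i=1}^k zeta_i (k>0), s(k)=-sum_{i=k+1}^0 zeta_i (k<0) *)
Definition stat_profile (zeta : int -> R) (k : int) : \bar R :=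
  (if 0 <= k then \sum_(i < `|k|%N) zeta (i.+1)%:Z
   else - \sum_(i < `|k|%N) zeta (- (i%:Z)))%:E.

Definition mu (rho : R) : R := (2 * rho - 1) / (rho * (1 - rho)).

Definition n13 (n : nat) : R := powR (n%:R) (3%:R^-1).
Definition n23 (n : nat) : R := powR (n%:R) (2%:R / 3%:R).

Definition rho_minus (n : nat) (r : R) : R := 2%:R^-1 - r / n13 n.
Definition rho_plus (n : nat) (r : R) : R := 2%:R^-1 + r / n13 n.

Definition scale (n : nat) : R := powR 2%:R (3%:R / 2%:R) * n13 n.

Definition Delta (omega : pt -> R) (b : int -> \bar R) (n : nat) (u : R) : \bar R :=
  ((Lb omega b (rdiag n (u * n23 n)) - Lb omega b (rdiag n 0)) * (scale n)^-1%:E)%E.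

Definition Bproc (omega : pt -> R) (zeta : int -> R) (rho : R) (n : nat) (u : R)
  : \bar R :=
  ((Lb omega (stat_profile zeta) (rdiag n (u * n23 n))
    - Lb omega (stat_profile zeta) (rdiag n 0)
    - (mu rho * u * n23 n)%:E) * (scale n)^-1%:E)%E.

Definition modW (C : R) (X : R -> \bar R) (delta : R) : \bar R :=
  ereal_sup [set `|X uv.1 - X uv.2|%E | uv in
    [set uv : R * R | 0 <= uv.1 <= C /\ 0 <= uv.2 <= C /\ `|uv.1 - uv.2| <= delta]].

End LPP.
Arguments n13 {R} n.
Arguments n23 {R} n.
Arguments scale {R} n.

From HB Require Import structures.
From mathcomp Require Import all_boot all_order all_algebra.
From mathcomp Require Import all_classical all_reals.
From mathcomp Require Import ereal exp.
From mathcomp Require Import zify ring lra.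
Import Order.TTheory GRing.Theory Num.Theory.
Set Implicit Arguments. Unset Strict Implicit. Unset Printing Implicit Defensive.
Local Open Scope ring_scope.

(* Two up-right paths that leave the antidiagonal in one order and reach a later
   antidiagonal in the opposite order must meet; exchanging their tails at the meeting
   point gives the quadrangle inequality
     L_z[k'] + L_z'[k] <= L_z[k] + L_z'[k']   for z <= z' and k <= k'.
   Hence the exit points Z^b[k] are nondecreasing in k, and Z^b1[k'] <= Z^b2[k] forces
   L^b1[k'] - L^b1[k] <= L^b2[k'] - L^b2[k].  On E_n(r) this orders the exit points of
   rho_n^-, b and rho_n^+ so that every increment of L^b on [0, C n^(2/3)] lies between
   the corresponding increments of the two stationary processes.  After centring and
   scaling, the increments of Delta_n^b are thus squeezed between those of B_n^- and B_n^+
   up to the drifts, which are at most 3 sqrt 2 r |u - v| since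
   |mu_rho| <= (32/3) |rho - 1/2| on [1/4, 3/4]. *)

Lemma exists_argmax (T : choiceType) d (V : orderType d) (l : seq T)
    (P : T -> Prop) (g : T -> V) t0 :
  (forall t, P t -> t \in l) -> P t0 ->
  exists2 t, P t & forall t', P t' -> (g t' <= g t)%O.
Proof.
move=> Pl Pt0; pose i0 : seq_sub l := SeqSub (Pl _ Pt0).
have [|i /asboolP Pi maxi] := @arg_maxP _ _ _ i0 (fun i => `[< P (val i) >]) (g \o val).
  exact/asboolP.
by exists (val i) => // t' Pt'; apply: (maxi (SeqSub (Pl _ Pt'))); apply/asboolP.
Qed.

Lemma ereal_sup_image_attained (R : realType) (T : choiceType) (l : seq T)
    (P : T -> Prop) (f : T -> \bar R) t0 :
  (forall t, P t -> t \in l) -> P t0 ->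
  exists2 t, P t & ereal_sup [set f t | t in P] = f t.
Proof.
move=> Pl Pt0; have [t Pt maxt] := @exists_argmax _ _ _ _ _ f _ Pl Pt0.
exists t => //; apply/le_anti/andP; split.
  by apply: ge_ereal_sup => _ [t' Pt' <-]; exact: maxt.
by apply: ereal_sup_ubound; exists t.
Qed.

Section Paths.
Variables (R : realType) (omega : pt -> R).

Lemma path_pt_cat a s1 s2 t :
  path_pt a (s1 ++ s2) (size s1 + t) = path_pt (path_pt a s1 (size s1)) s2 t.
Proof.
rewrite /path_pt takeD take_size_cat // drop_size_cat //= !count_cat take_size.
by rewrite !PoszD !addrA.
Qed.

Lemma path_pt_take a s t : path_pt a (take t s) (size (take t s)) = path_pt a s t.
Proof. by rewrite /path_pt take_size. Qed.

Lemma path_pt_take_cat a s u t j :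
  path_pt a (take t s ++ u) (size (take t s) + j) = path_pt (path_pt a s t) u j.
Proof. by rewrite path_pt_cat path_pt_take. Qed.

Lemma passage_cat a s1 s2 :
  passage omega a (s1 ++ s2) =
  passage omega a s1 + passage omega (path_pt a s1 (size s1)) s2.
Proof.
rewrite /passage size_cat (@big_cat_nat _ _ _ (size s1).+1) //=; last first.
  by rewrite ltnS leq_addr.
congr (_ + _).
  by apply: eq_big_nat => t /andP [_ ht]; rewrite /path_pt takel_cat.
rewrite -add1n big_addn.
have -> : ((size s1 + size s2).+1 - size s1 = (size s2).+1)%N by lia.
by apply: eq_big_nat => t _; rewrite addnC path_pt_cat.
Qed.

Lemma passage_take_cat a s u t :
  passage omega a (take t s ++ u) =
  passage omega a (take t s) + passage omega (path_pt a s t) u.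
Proof. by rewrite passage_cat path_pt_take. Qed.

Lemma path_pt_sum a s t : (t <= size s)%N ->
  (path_pt a s t).1 + (path_pt a s t).2 = a.1 + a.2 + t%:Z.
Proof.
move=> ts; have e : (count id (take t s) + count negb (take t s))%N = t.
  by rewrite -[RHS](minn_idPl ts) -size_take_min -(count_predC id).
by rewrite /path_pt /= -[in RHS]e PoszD addrACA.
Qed.

Lemma size_path a x s : paths_from_to a x s ->
  (size s)%:Z = (x.1 - a.1) + (x.2 - a.2).
Proof. by move=> <-; have := path_pt_sum a (leqnn (size s)); lia. Qed.

Lemma path_pt_fst_step a s t :
  (path_pt a s t).1 <= (path_pt a s t.+1).1 <= (path_pt a s t).1 + 1.
Proof.
rewrite /path_pt /= -addn1 takeD count_cat.
by case: (drop t s) => [|[] ?]; rewrite /= ?take0 /=; apply/andP; split; lia.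
Qed.

Lemma LPT_ge a x s : paths_from_to a x s ->
  ((passage omega a s)%:E <= LPT omega a x)%E.
Proof. by move=> h; apply: ereal_sup_ubound; exists s. Qed.

Lemma LPT_attained a x : ptle a x ->
  exists2 s, paths_from_to a x s & LPT omega a x = (passage omega a s)%:E.
Proof.
case=> h1 h2; pose m := absz ((x.1 - a.1) + (x.2 - a.2)).
pose l := map (@tval m bool) (enum {: m.-tuple bool}).
have inl s : paths_from_to a x s -> s \in l.
  move=> /size_path hs; have Hs : size s == m by apply/eqP; lia.
  by apply/mapP; exists (Tuple Hs); rewrite ?mem_enum.
pose s0 := nseq (absz (x.1 - a.1)) true ++ nseq (absz (x.2 - a.2)) false.
have Ps0 : paths_from_to a x s0.
  rewrite /paths_from_to /= /path_pt /s0 take_size !count_cat !count_nseq /=.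
  by case: x h1 h2 {m l inl s0} => x1 x2 /= h1 h2; congr (_, _); lia.
exact: ereal_sup_image_attained inl Ps0.
Qed.

Lemma Lk_fin_num k x : Cset x k -> Lk omega k x \is a fin_num.
Proof. by case/LPT_attained => s _; rewrite /Lk => ->. Qed.

End Paths.

Lemma int_ivt (f : nat -> int) m : f 0%N <= 0 -> 0 <= f m ->
  (forall t, f t.+1 <= f t + 1) -> exists2 t, (t <= m)%N & f t = 0.
Proof.
move=> f0 fm step; elim: m fm => [|m IH] fm.
  by exists 0%N => //; apply/le_anti; rewrite f0 fm.
have [fm0|fm0] := leP 0 (f m).
  by have [t tm ft] := IH fm0; exists t => //; exact: leqW.
by exists m.+1 => //; have := step m; lia.
Qed.

Section Crossing.
Variables (R : realType) (omega : pt -> R).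

Lemma paths_meet N k k' z z' s s' : z <= z' -> k <= k' ->
  paths_from_to (z, - z) (diag N k') s -> paths_from_to (z', - z') (diag N k) s' ->
  exists t, path_pt (z, - z) s t = path_pt (z', - z') s' t.
Proof.
move=> zz' kk' Ps Ps'.
have := size_path Ps; have := size_path Ps'; rewrite /diag /= => ss' ss.
pose f t := (path_pt (z, - z) s t).1 - (path_pt (z', - z') s' t).1.
have [t tN ft] : exists2 t, (t <= 2 * N)%N & f t = 0.
  apply: int_ivt => [|| t]; rewrite /f.
  - by rewrite /path_pt /= !take0 /=; lia.
  - have e : (2 * N = size s)%N by lia.
    have e' : (2 * N = size s')%N by lia.
    by rewrite {1}e Ps e' Ps' /=; lia.
  - by have := path_pt_fst_step (z, - z) s t; have := path_pt_fst_step (z', - z') s' t; lia.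
have ts : (t <= size s)%N by lia.
have ts' : (t <= size s')%N by lia.
have e := path_pt_sum (z, - z) ts; have e' := path_pt_sum (z', - z') ts'.
exists t; move: ft e e'; rewrite /f /path_pt /= => *.
by congr (_, _); lia.
Qed.

Lemma paths_swap a a' y s s' t : path_pt a s t = path_pt a' s' t ->
  paths_from_to a' y s' -> paths_from_to a y (take t s ++ drop t s').
Proof.
move=> meet Ps'; rewrite /paths_from_to /= size_cat path_pt_take_cat meet.
by rewrite -path_pt_take_cat -size_cat cat_take_drop.
Qed.

Lemma passage_swap a a' s s' t : path_pt a s t = path_pt a' s' t ->
  passage omega a (take t s ++ drop t s') + passage omega a' (take t s' ++ drop t s) =
  passage omega a s + passage omega a' s'.
Proof.
move=> meet.
rewrite -{3}(cat_take_drop t s) -{3}(cat_take_drop t s') !passage_take_cat meet.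
by rewrite addrACA [X in _ + X]addrC addrACA.
Qed.

Lemma Cset_diag_between N k k' k'' z z' : z <= z' -> k <= k'' -> k'' <= k' ->
  Cset (diag N k') z -> Cset (diag N k) z' -> Cset (diag N k'') z /\ Cset (diag N k'') z'.
Proof. by rewrite /Cset /ptle /diag /= => ? ? ? [? ?] [? ?]; split; split; lia. Qed.

Lemma Lk_quadrangle N k k' z z' : z <= z' -> k <= k' ->
  Cset (diag N k') z -> Cset (diag N k) z' ->
  (Lk omega z (diag N k') + Lk omega z' (diag N k) <=
   Lk omega z (diag N k) + Lk omega z' (diag N k'))%E.
Proof.
move=> zz' kk' Cz Cz'; rewrite /Lk.
have [s Ps ->] := LPT_attained omega Cz; have [s' Ps' ->] := LPT_attained omega Cz'.
have [t meet] := paths_meet zz' kk' Ps Ps'.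
rewrite -EFinD -(passage_swap meet) EFinD.
apply: leeD; apply: LPT_ge.
- exact: paths_swap meet Ps'.
- exact: paths_swap (esym meet) Ps.
Qed.

End Crossing.

Section Profiles.
Variables (R : realType) (omega : pt -> R).
Implicit Types (b : int -> \bar R) (x : pt).

Lemma Lb_ge b x k : Cset x k -> (b k + Lk omega k x <= Lb omega b x)%E.
Proof. by move=> Ck; apply: ereal_sup_ubound; exists k. Qed.

Lemma Cset_fst x : 0 <= x.1 + x.2 -> Cset x x.1.
Proof. by move=> hx; split => /=; lia. Qed.

Lemma Cset_sum_ge0 x k : Cset x k -> 0 <= x.1 + x.2.
Proof. by case=> /= *; lia. Qed.

Lemma Zb_spec b x : 0 <= x.1 + x.2 -> is_Zb omega b x (Zb omega b x).
Proof.
move=> hx; apply: xgetPex.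
pose l := [seq - x.2 + i%:Z | i <- iota 0 (absz (x.1 + x.2)).+1].
have inl k : Cset x k -> k \in l.
  case=> /= h1 h2; apply/mapP; exists (absz (k + x.2)); last by lia.
  by rewrite mem_iota; lia.
pose f k := (b k + Lk omega k x)%E.
have [k0 Ck0 Lbk0] := ereal_sup_image_attained f inl (Cset_fst hx).
have [k [Ck fk] maxk] := @exists_argmax _ _ _ l
  (fun k => Cset x k /\ f k = Lb omega b x) id k0 (fun k Pk => inl k Pk.1) (conj Ck0 (esym Lbk0)).
by exists k; do 2!split => //; move=> k' Ck' fk'; exact: maxk.
Qed.

Lemma Lb_fin_num b x k : (forall j, b j != +oo%E) -> Cset x k ->
  b k \is a fin_num -> Lb omega b x \is a fin_num.
Proof.
move=> bNy Ck bk.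
have [Cz [ez _]] := Zb_spec b (Cset_sum_ge0 Ck).
have lower := Lb_ge b Ck; rewrite -ez in lower *.
rewrite fin_numD (Lk_fin_num omega Cz) andbT.
move: (bNy (Zb omega b x)) lower; case: (b _) => // _.
rewrite addNye leeNy_eq => /eqP bLk.
by have := fin_numD (b k) (Lk omega k x); rewrite bLk bk (Lk_fin_num omega Ck).
Qed.

Lemma Lb_stat_fin_num zeta x : 0 <= x.1 + x.2 ->
  Lb omega (stat_profile zeta) x \is a fin_num.
Proof. by move=> hx; apply: (Lb_fin_num _ (Cset_fst hx)). Qed.

Lemma diag_sum_ge0 N k : 0 <= (diag N k).1 + (diag N k).2.
Proof. by rewrite /diag /=; lia. Qed.

Lemma Zb_diag_mono b N k k' : k <= k' -> Lb omega b (diag N k) \is a fin_num ->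
  Zb omega b (diag N k) <= Zb omega b (diag N k').
Proof.
move=> kk' fin.
have [Cz [ez _]] := Zb_spec b (diag_sum_ge0 N k).
have [Cz' [ez' maxz']] := Zb_spec b (diag_sum_ge0 N k').
set z := Zb omega b (diag N k) in Cz ez *.
set z' := Zb omega b (diag N k') in Cz' ez' maxz' *.
have [//|z'z] := leP z z'.
(* By the quadrangle inequality z would also be a maximizer at [k'], beyond z'. *)
suff : z <= z' by rewrite leNgt z'z.
have [Cz'k _] := Cset_diag_between (ltW z'z) (lexx k) kk' Cz' Cz.
have [_ Czk'] := Cset_diag_between (ltW z'z) kk' (lexx k') Cz' Cz.
apply: (maxz' _ Czk'); apply/le_anti; rewrite (Lb_ge b Czk') /=.
rewrite -ez' -(@leeD2rE _ (Lb omega b (diag N k))) //.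
apply: (@le_trans _ _ ((b z' + Lk omega z' (diag N k)) + (b z + Lk omega z (diag N k')))%E).
  rewrite -[X in (_ + X <= _)%E]ez addeACA [X in (_ <= X)%E]addeACA.
  apply: leeD2l.
  exact: Lk_quadrangle (ltW z'z) kk' Cz' Cz.
by rewrite addeC; apply: leeD2l; exact: Lb_ge.
Qed.

Lemma Lb_diag_compare b1 b2 N k k' : k <= k' ->
  Zb omega b1 (diag N k') <= Zb omega b2 (diag N k) ->
  (Lb omega b1 (diag N k') + Lb omega b2 (diag N k) <=
   Lb omega b1 (diag N k) + Lb omega b2 (diag N k'))%E.
Proof.
move=> kk' z12.
have [Cz1 [ez1 _]] := Zb_spec b1 (diag_sum_ge0 N k').
have [Cz2 [ez2 _]] := Zb_spec b2 (diag_sum_ge0 N k).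
have [Cz1k _] := Cset_diag_between z12 (lexx k) kk' Cz1 Cz2.
have [_ Cz2k'] := Cset_diag_between z12 kk' (lexx k') Cz1 Cz2.
rewrite -ez1 -ez2 addeACA.
apply: le_trans (leeD (Lb_ge b1 Cz1k) (Lb_ge b2 Cz2k')).
rewrite [X in (_ <= X)%E]addeACA.
by apply: leeD2l; exact: Lk_quadrangle.
Qed.

Lemma Lb_fin_num_origin b N : b 0 = 0%E -> (forall j, b j != +oo%E) ->
  Lb omega b (diag N 0) \is a fin_num.
Proof.
move=> b0 bNy; have C00 : Cset (diag N 0) 0 by split => /=; lia.
by apply: (Lb_fin_num bNy C00); rewrite b0.
Qed.

End Profiles.

Lemma floor_mulr_le (R : realType) (N u v : R) : 0 <= N -> 0 <= u -> u <= v ->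
  0 <= Num.floor (u * N) <= Num.floor (v * N).
Proof. by move=> N0 u0 uv; rewrite floor_ge0 mulr_ge0 //= le_floor // ler_wpM2r. Qed.

Section Modulus.
Variable R : realType.

Lemma abse_subC (x y : \bar R) : (`|x - y| = `|y - x|)%E.
Proof. by case: x y => [x||] [y||] //=; rewrite distrC. Qed.

Lemma modW_le_pointwise (C delta c : R) (X Y1 Y2 : R -> \bar R) :
  (forall u v, 0 <= u -> u <= v -> v <= C -> v - u <= delta ->
    (`|X u - X v| <= maxe `|Y1 u - Y1 v| `|Y2 u - Y2 v| + c%:E)%E) ->
  (modW C X delta <= maxe (modW C Y1 delta) (modW C Y2 delta) + c%:E)%E.
Proof.
move=> pointwise; apply: ge_ereal_sup => _ [[u v] [/andP[u0 uC] [/andP[v0 vC] duv]] <-] /=.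
wlog uv : u v u0 uC v0 vC duv / u <= v.
  move=> wlog_uv; have [|/ltW vu] := leP u v; first exact: wlog_uv.
  by rewrite abse_subC; apply: wlog_uv; rewrite // distrC.
have vu_delta : v - u <= delta by rewrite distrC in duv; exact: le_trans (ler_norm _) duv.
apply: le_trans (pointwise _ _ u0 uv vC vu_delta) _.
apply/leeD2r/le_max2; apply: ereal_sup_ubound;
  by exists (u, v) => //=; rewrite u0 uC v0 vC; do !split.
Qed.

Lemma norm_le_sandwich (x q1 q2 e1 e2 c : R) :
  q1 + e1 <= x <= q2 + e2 -> `|e1| <= c -> `|e2| <= c ->
  `|x| <= Num.max `|q1| `|q2| + c.
Proof.
move=> /andP[lo hi] /ler_normlP[e1c _] /ler_normlP[_ e2c].
have q1m : `|q1| <= Num.max `|q1| `|q2| by rewrite le_max lexx.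
have q2m : `|q2| <= Num.max `|q1| `|q2| by rewrite le_max lexx orbT.
have := ler_norm q2; have := ler_norm (- q1); rewrite normrN => *.
by rewrite ler_norml; apply/andP; split; lra.
Qed.

Lemma sandwich_increment_le (S N c a1 a2 x0 y10 y20 u v delta : R) (x y1 y2 : R -> R) :
  0 < S -> 0 <= N -> `|a1| * N / S <= c -> `|a2| * N / S <= c ->
  u <= v -> v - u <= delta ->
  y1 v + x u <= y1 u + x v -> x v + y2 u <= x u + y2 v ->
  `|(x u - x0) / S - (x v - x0) / S| <=
  Num.max `|(y1 u - y10 - a1 * u * N) / S - (y1 v - y10 - a1 * v * N) / S|
          `|(y2 u - y20 - a2 * u * N) / S - (y2 v - y20 - a2 * v * N) / S|
  + c * delta.
Proof.
move=> S0 N0 c1 c2 uv vu_delta lower upper.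
have drift a : `|a| * N / S <= c -> `|a * N / S * (v - u)| <= c * delta.
  move=> ca; rewrite normrM [`|v - u|]ger0_norm ?subr_ge0 //.
  rewrite !normrM normfV (ger0_norm N0) (gtr0_norm S0).
  apply: (ler_pM _ _ ca vu_delta); last by rewrite subr_ge0.
  exact: divr_ge0 (mulr_ge0 (normr_ge0 a) N0) (ltW S0).
have incr f f0 a : (f u - f0 - a * u * N) / S - (f v - f0 - a * v * N) / S =
    - ((f v - f u) / S - a * N / S * (v - u)) by ring.
have incr0 : (x u - x0) / S - (x v - x0) / S = - ((x v - x u) / S) by ring.
rewrite incr0 !incr !normrN.
apply: norm_le_sandwich (drift _ c1) (drift _ c2).
by rewrite !subrK !ler_pM2r ?invr_gt0 //; apply/andP; split; lra.
Qed.

Lemma modW_sandwich (C delta S N c a1 a2 : R) (x y1 y2 : R -> \bar R)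
    (x0 y10 y20 : \bar R) :
  0 < S -> 0 <= N -> `|a1| * N / S <= c -> `|a2| * N / S <= c ->
  x0 \is a fin_num -> y10 \is a fin_num -> y20 \is a fin_num ->
  (forall u, 0 <= u <= C -> x u \is a fin_num) ->
  (forall u, 0 <= u <= C -> y1 u \is a fin_num) ->
  (forall u, 0 <= u <= C -> y2 u \is a fin_num) ->
  (forall u v, 0 <= u -> u <= v -> v <= C -> (y1 v + x u <= y1 u + x v)%E) ->
  (forall u v, 0 <= u -> u <= v -> v <= C -> (x v + y2 u <= x u + y2 v)%E) ->
  (modW C (fun u => (x u - x0) * S^-1%:E) delta <=
   maxe (modW C (fun u => (y1 u - y10 - (a1 * u * N)%:E) * S^-1%:E) delta)
        (modW C (fun u => (y2 u - y20 - (a2 * u * N)%:E) * S^-1%:E) delta)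
   + (c * delta)%:E)%E.
Proof.
move=> S0 N0 c1 c2 fx0 fy10 fy20 fx fy1 fy2 lower upper.
apply: modW_le_pointwise => u v u0 uv vC vu_delta.
have hu : 0 <= u <= C by rewrite u0 (le_trans uv vC).
have hv : 0 <= v <= C by rewrite vC (le_trans u0 uv).
have := lower u v u0 uv vC; have := upper u v u0 uv vC.
rewrite -(fineK fx0) -(fineK fy10) -(fineK fy20) -(fineK (fx u hu)) -(fineK (fx v hv)).
rewrite -(fineK (fy1 u hu)) -(fineK (fy1 v hv)) -(fineK (fy2 u hu)) -(fineK (fy2 v hv)).
rewrite -!EFinD !lee_fin => up lo.
rewrite !abse_EFin -EFin_max -EFinD lee_fin.
exact: (sandwich_increment_le (x := fun w => fine (x w)) (y1 := fun w => fine (y1 w))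
  (y2 := fun w => fine (y2 w)) (fine x0) (fine y10) (fine y20) S0 N0 c1 c2 uv vu_delta lo up).
Qed.

End Modulus.

Section Scaling.
Variable R : realType.

Lemma n13_gt0 n : (0 < n)%N -> 0 < n13 n :> R.
Proof. by move=> n0; apply: powR_gt0; rewrite ltr0n. Qed.

Lemma n23_ge0 n : 0 <= n23 n :> R.
Proof. exact: powR_ge0. Qed.

Lemma n23E n : n23 n = n13 n ^+ 2 :> R.
Proof.
rewrite /n23 /n13 expr2 -powRD; last by rewrite gt_eqF // addr_gt0 // invr_gt0 ltr0n.
by congr powR; field.
Qed.

Lemma scaleE n : scale n = 2 * Num.sqrt 2 * n13 n :> R.
Proof.
rewrite /scale; congr (_ * _).
have -> : (3%:R / 2%:R : R) = 1 + 2^-1 by field.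
by rewrite powRD ?pnatr_eq0 ?implybT // powRr1 ?ler0n // powR12_sqrt ?ler0n.
Qed.

Lemma mu_norm_le (rho : R) : 4^-1 <= rho <= 3 / 4 ->
  `|mu rho| <= 32 / 3 * `|rho - 2^-1|.
Proof.
move=> /andP[lo hi]; have var_ge : 3 / 16 <= rho * (1 - rho) by nra.
have var_gt0 : 0 < rho * (1 - rho) by lra.
rewrite /mu normrM normfV (gtr0_norm var_gt0) ler_pdivrMr //.
have -> : 2 * rho - 1 = 2 * (rho - 2^-1) by field.
rewrite normrM ger0_norm //; have := normr_ge0 (rho - 2^-1); nra.
Qed.

Lemma drift_le n (rho r : R) : (0 < n)%N -> 4^-1 <= rho <= 3 / 4 ->
  `|rho - 2^-1| <= r / n13 n ->
  `|mu rho| * n23 n / scale n <= 3 * Num.sqrt 2 * r.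
Proof.
move=> n0 rho_range dev; have t0 := n13_gt0 n0.
have s0 : 0 < Num.sqrt 2 :> R by rewrite sqrtr_gt0 ltr0n.
have s2 : Num.sqrt 2 ^+ 2 = 2 :> R by rewrite sqr_sqrtr ?ler0n.
rewrite n23E scaleE.
have -> : `|mu rho| * n13 n ^+ 2 / (2 * Num.sqrt 2 * n13 n) =
    `|mu rho| * n13 n / (2 * Num.sqrt 2) by field; rewrite ?gt_eqF.
rewrite ler_pdivrMr ?mulr_gt0 //.
rewrite ler_pdivlMr // in dev.
have r0 : 0 <= r by apply: le_trans _ dev; rewrite mulr_ge0 // ltW.
have mu_t : `|mu rho| * n13 n <= 32 / 3 * r.
  apply: le_trans (ler_wpM2r (ltW t0) (mu_norm_le rho_range)) _.
  nra.
have -> : 3 * Num.sqrt 2 * r * (2 * Num.sqrt 2) = 6 * Num.sqrt 2 ^+ 2 * r :> R by ring.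
rewrite s2; lra.
Qed.

Lemma rho_minus_dev n (r : R) : 0 <= r -> `|rho_minus n r - 2^-1| = r / n13 n.
Proof.
move=> r0; rewrite /rho_minus addrAC subrr add0r normrN ger0_norm //.
by rewrite divr_ge0 // powR_ge0.
Qed.

Lemma rho_plus_dev n (r : R) : 0 <= r -> `|rho_plus n r - 2^-1| = r / n13 n.
Proof.
move=> r0; rewrite /rho_plus addrAC subrr add0r ger0_norm //.
by rewrite divr_ge0 // powR_ge0.
Qed.

End Scaling.

Section Event.
Variables (R : realType) (omega : pt -> R) (b : int -> \bar R) (zeta_m zeta_p : int -> R).
Variables (n : nat) (C : R).
Hypotheses (b0 : b 0 = 0%E) (bNy : forall k, b k != +oo%E).
Hypothesis Em :
  Zb omega (stat_profile zeta_m) (rdiag n (C * n23 n)) <= Zb omega b (rdiag n (0 : R)).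
Hypothesis Ep :
  Zb omega b (rdiag n (C * n23 n)) <= Zb omega (stat_profile zeta_p) (rdiag n (0 : R)).

Local Notation K := (Num.floor (C * n23 n)).

Lemma Lb_fin_num_diag k : 0 <= k <= K -> Lb omega b (diag n k) \is a fin_num.
Proof.
move=> /andP[k0 kK]; have Em0 := Em; rewrite /rdiag floor0 in Em0.
have [Cz0 [ez0 _]] := Zb_spec omega b (diag_sum_ge0 n 0).
have [Czm _] := Zb_spec omega (stat_profile zeta_m) (diag_sum_ge0 n K).
have [_ Cz0k] := Cset_diag_between Em0 k0 kK Czm Cz0.
apply: (Lb_fin_num omega bNy Cz0k).
by move: (Lb_fin_num_origin omega n b0 bNy); rewrite -ez0 fin_numD => /andP[].
Qed.

Lemma Lb_fin_num_event u : 0 <= u <= C -> Lb omega b (rdiag n (u * n23 n)) \is a fin_num.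
Proof.
by move=> /andP[u0 uC]; apply: Lb_fin_num_diag; exact: (floor_mulr_le (n23_ge0 R n) u0 uC).
Qed.

Lemma Lb_increment_lower u v : 0 <= u -> u <= v -> v <= C ->
  (Lb omega (stat_profile zeta_m) (rdiag n (v * n23 n)) + Lb omega b (rdiag n (u * n23 n)) <=
   Lb omega (stat_profile zeta_m) (rdiag n (u * n23 n)) + Lb omega b (rdiag n (v * n23 n)))%E.
Proof.
move=> u0 uv vC; have Em0 := Em; rewrite /rdiag floor0 in Em0 *.
have /andP[k0 kk'] := floor_mulr_le (n23_ge0 R n) u0 uv.
have /andP[_ k'K] := floor_mulr_le (n23_ge0 R n) (le_trans u0 uv) vC.
apply: Lb_diag_compare kk' _.
apply: le_trans (Zb_diag_mono k'K (Lb_stat_fin_num _ _ (diag_sum_ge0 _ _))) _.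
exact: le_trans Em0 (Zb_diag_mono k0 (Lb_fin_num_origin omega n b0 bNy)).
Qed.

Lemma Lb_increment_upper u v : 0 <= u -> u <= v -> v <= C ->
  (Lb omega b (rdiag n (v * n23 n)) + Lb omega (stat_profile zeta_p) (rdiag n (u * n23 n)) <=
   Lb omega b (rdiag n (u * n23 n)) + Lb omega (stat_profile zeta_p) (rdiag n (v * n23 n)))%E.
Proof.
move=> u0 uv vC; have Ep0 := Ep; rewrite /rdiag floor0 in Ep0 *.
have /andP[k0 kk'] := floor_mulr_le (n23_ge0 R n) u0 uv.
have /andP[k'0 k'K] := floor_mulr_le (n23_ge0 R n) (le_trans u0 uv) vC.
apply: Lb_diag_compare kk' _.
apply: le_trans (Zb_diag_mono k'K (Lb_fin_num_diag _)) _; first by rewrite k'0.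
exact: le_trans Ep0 (Zb_diag_mono k0 (Lb_stat_fin_num _ _ (diag_sum_ge0 _ _))).
Qed.

End Event.

Theorem corollary1 (R : realType) (omega : pt -> R) (b : int -> \bar R)
  (zeta_m zeta_p : int -> R) (C r : R) (n : nat) :
  is_profile b -> 0 <= C -> 0 < r -> (0 < n)%N ->
  4%:R^-1 <= rho_minus n r <= 3%:R / 4%:R ->
  4%:R^-1 <= rho_plus n r <= 3%:R / 4%:R ->
  (* the event E_n(r) *)
  Zb omega (stat_profile zeta_m) (rdiag n (C * n23 n)) <= Zb omega b (rdiag n (0:R)) ->
  Zb omega b (rdiag n (C * n23 n)) <= Zb omega (stat_profile zeta_p) (rdiag n (0:R)) ->
  forall delta : R, 0 <= delta <= C ->
    (modW C (Delta omega b n) delta <=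
     maxe (modW C (Bproc omega zeta_m (rho_minus n r) n) delta)
          (modW C (Bproc omega zeta_p (rho_plus n r) n) delta)
     + (3%:R * Num.sqrt 2%:R * delta * r)%:E)%E.
Proof.
move=> [b0 bNy] _ /ltW r0 n0 rho_m rho_p Em Ep delta _.
have stat_fin zeta u := Lb_stat_fin_num omega zeta (diag_sum_ge0 n (Num.floor (u * n23 n))).
rewrite -mulrA [delta * r]mulrC mulrA.
apply: (@modW_sandwich _ C delta _ _ _ _ _ (fun u => Lb omega b (rdiag n (u * n23 n)))
  (fun u => Lb omega (stat_profile zeta_m) (rdiag n (u * n23 n)))
  (fun u => Lb omega (stat_profile zeta_p) (rdiag n (u * n23 n)))).
- by rewrite scaleE !mulr_gt0 ?sqrtr_gt0 ?ltr0n ?n13_gt0.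
- exact: n23_ge0.
- by apply: drift_le; rewrite ?rho_minus_dev.
- by apply: drift_le; rewrite ?rho_plus_dev.
- by rewrite /rdiag floor0; exact: Lb_fin_num_origin.
- by rewrite /rdiag floor0; exact: Lb_stat_fin_num.
- by rewrite /rdiag floor0; exact: Lb_stat_fin_num.
- exact: (Lb_fin_num_event b0 bNy Em).
- by move=> u _; exact: stat_fin.
- by move=> u _; exact: stat_fin.
- exact: (Lb_increment_lower b0 bNy Em).
- exact: (Lb_increment_upper b0 bNy Em Ep).
Qed.
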